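(* Let $k,m\in\mathbb{N}$ and let $p_1,\ldots,p_m\in\mathbb{Z}[x_1,\ldots,x_k]$ be polynomials in $k$ variables with integer coefficients and without constant terms. Then for any finite partition $\mathcal{C}$ of $\mathbb{Z}$ and all sequences $f_1,\ldots,f_k:\mathbb{N}\to\mathbb{Z}$, there exist a cell $C\in\mathcal{C}$, an integer $a\in\mathbb{Z}$ and finite nonempty sets $F_1,\ldots,F_k\subseteq\mathbb{N}$ such that \[ \Big\{a+p_i\Big(\sum_{t\in F_1}f_1(t),\sum_{t\in F_2}f_2(t),\ldots,\sum_{t\in F_k}f_k(t)\Big): i=1,2,\ldots,m\Big\}\subseteq C. \]
   Context: $P_f(\mathbb{N})$ denotes the set of finite nonempty subsets of $\mathbb{N}$; the sets $F_1,\ldots,F_k$ are elements of $P_f(\mathbb{N})$ (the paper writes $F=F_1\times\cdots\times F_k\in\times_{i=1}^kP_f(\mathbb{N})$). *)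

From mathcomp Require Import all_boot all_order all_algebra.
From mathcomp Require Import finmap.
From mathcomp Require Export mpoly.
Set Implicit Arguments. Unset Strict Implicit. Unset Printing Implicit Defensive.

(* Call a function h on Z^k a polynomial of degree at most d when its
   reduced differences h (x + v) - h x - h v are polynomials of degree at most
   d - 1; integer polynomials without constant term are of this kind.  Call a
   finite family R of such functions IP-recurrent when every finite colouring
   of Z admits a point a and a nonempty finite A with a + h (ipsum A) coloured
   like a for all h in R, where ipsum A is the vector of the sums of the f_l
   over A, and with |a| and A bounded independently of the colouring.

   Recurrence is proved by PET induction: sort R into classes of equal degree
   modulo lower degree and induct lexicographically on the number of classes
   of each degree.  For a pivot q of minimal degree, the families of all
   x |-> h (ipsum A + x) - h (ipsum A) - q x, with A inside a fixed finite X
   and h in R, have smaller weight.  Applied to the colouring of each point by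
   the colours in a window around it, their recurrence drives the
   colour-focusing argument: it produces sets A_1, ..., A_j with distinct
   colours all focused at one base point, and once j = #|T| the base point
   itself has the colour of some A_i, which is the witness for R. *)

From mathcomp Require Import all_boot all_order all_algebra.
From mathcomp Require Import finmap mpoly ring zify.
From Stdlib Require ClassicalDescription List.
Import Order.TTheory GRing.Theory Num.Theory.
Set Implicit Arguments. Unset Strict Implicit. Unset Printing Implicit Defensive.
Local Open Scope ring_scope.

Section Degree.
Variable k : nat.
Local Notation V := {ffun 'I_k -> int}.

(* Reduced differences also kill constants, so [deg_le d h] forces [h 0 = 0]. *)
Definition diff (v : V) (h : V -> int) (x : V) : int := h (x + v) - h x - h v.

Fixpoint deg_le (d : nat) (h : V -> int) : Prop :=
  match d with
  | 0%N => forall x, h x = 0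
  | d'.+1 => forall v, deg_le d' (diff v h)
  end.

Lemma eq_deg_le d h g : h =1 g -> deg_le d h -> deg_le d g.
Proof.
elim: d h g => [|d IHd] h g hg /=; first by move=> h0 x; rewrite -hg.
by move=> hd v; apply: IHd (hd v) => x; rewrite /diff !hg.
Qed.

Lemma deg_le_zero d : deg_le d (fun=> 0).
Proof.
by elim: d => [|d IHd] //= v; apply: eq_deg_le IHd => x; rewrite /diff !subr0.
Qed.

Lemma deg_leD d h g :
  deg_le d h -> deg_le d g -> deg_le d (fun x => h x + g x).
Proof.
elim: d h g => [|d IHd] h g /=; first by move=> h0 g0 x; rewrite h0 g0 addr0.
by move=> hd gd v; apply: eq_deg_le (IHd _ _ (hd v) (gd v)) => x; rewrite /diff; ring.
Qed.

Lemma deg_le_scale d c h : deg_le d h -> deg_le d (fun x => c * h x).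
Proof.
elim: d h => [|d IHd] h /=; first by move=> h0 x; rewrite h0 mulr0.
by move=> hd v; apply: eq_deg_le (IHd _ (hd v)) => x; rewrite /diff; ring.
Qed.

Lemma deg_leB d h g :
  deg_le d h -> deg_le d g -> deg_le d (fun x => h x - g x).
Proof.
move=> hd /(deg_le_scale (-1)) gd.
by apply: eq_deg_le (deg_leD hd gd) => x; ring.
Qed.

Lemma deg_leS d h : deg_le d h -> deg_le d.+1 h.
Proof.
elim: d h => [|d IHd] h hd v; last exact: IHd.
by move=> x; rewrite /diff !hd !subr0.
Qed.

Lemma deg_le_mono d e h : (d <= e)%N -> deg_le d h -> deg_le e h.
Proof.
move=> /subnK <-; elim: (e - d)%N => [|n IHn] hd //.
by rewrite addSn; apply/deg_leS/IHn.
Qed.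

Lemma deg_le_at0 d h : deg_le d h -> h 0 = 0.
Proof.
elim: d h => [|d IHd] h hd; first exact: hd.
apply/eqP; rewrite -oppr_eq0.
by have := IHd _ (hd 0); rewrite /diff !addr0 subrr sub0r => ->.
Qed.

(* The difference of a product is expanded as
   [diff v (h g) = h g_v + h_v g + h G + h_v G + H g + g_v H + H G] with
   [H = diff v h], [G = diff v g]: each term has degree at most [d + e]. *)
Lemma deg_leM d e h g :
  deg_le d h -> deg_le e g -> deg_le (d + e) (fun x => h x * g x).
Proof.
elim: d e h g => [|d IHd] e h g hd.
  by move=> _; apply: eq_deg_le (deg_le_zero e) => x; rewrite hd mul0r.
elim: e g => [|e IHe] g gd.
  by rewrite addn0; apply: eq_deg_le (deg_le_zero _) => x; rewrite gd mulr0.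
rewrite addSn => v /=.
have Hd : deg_le d (diff v h) := hd v.
have Gd : deg_le e (diff v g) := gd v.
have le_d : (d <= d + e.+1)%N by rewrite leq_addr.
have le_e : (e <= d + e.+1)%N by rewrite addnS leqW // leq_addl.
have t1 : deg_le (d + e.+1) (fun x => g v * h x).
  by apply: deg_le_mono (deg_le_scale _ hd); rewrite addnS ltnS leq_addr.
have t2 := deg_le_mono (leq_addl d e.+1) (deg_le_scale (h v) gd).
have t3 : deg_le (d + e.+1) (fun x => h x * diff v g x).
  by rewrite -addSnnS; apply: IHe.
have t4 := deg_le_mono le_e (deg_le_scale (h v) Gd).
have t5 := IHd _ _ _ Hd gd.
have t6 := deg_le_mono le_d (deg_le_scale (g v) Hd).
have t7 := deg_le_mono (leq_add (leqnn d) (leqnSn e)) (IHd _ _ _ Hd Gd).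
have := deg_leD (deg_leD (deg_leD t1 t2) (deg_leD t3 t4)) (deg_leD (deg_leD t5 t6) t7).
by apply: eq_deg_le => x; rewrite /diff; ring.
Qed.

Definition polyfun (g : V -> int) := exists d, deg_le d (fun x => g x - g 0).

Lemma eq_polyfun g1 g2 : g1 =1 g2 -> polyfun g1 -> polyfun g2.
Proof. by move=> eq_g [d gd]; exists d; apply: eq_deg_le gd => x; rewrite !eq_g. Qed.

Lemma polyfun_const c : polyfun (fun=> c).
Proof. by exists 0%N => x; rewrite subrr. Qed.

Lemma polyfun_coord l : polyfun (fun x => x l).
Proof. by exists 1%N => v x; rewrite /diff !ffunE; ring. Qed.

Lemma polyfunD g1 g2 : polyfun g1 -> polyfun g2 -> polyfun (fun x => g1 x + g2 x).
Proof.
move=> [d1 gd1] [d2 gd2]; exists (maxn d1 d2).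
have := deg_leD (deg_le_mono (leq_maxl d1 d2) gd1) (deg_le_mono (leq_maxr d1 d2) gd2).
by apply: eq_deg_le => x; ring.
Qed.

Lemma polyfunM g1 g2 : polyfun g1 -> polyfun g2 -> polyfun (fun x => g1 x * g2 x).
Proof.
move=> [d1 gd1] [d2 gd2]; exists (d1 + d2)%N.
have t1 := deg_le_mono (leq_addr d2 d1) (deg_le_scale (g2 0) gd1).
have t2 := deg_le_mono (leq_addl d1 d2) (deg_le_scale (g1 0) gd2).
have := deg_leD (deg_leD (deg_leM gd1 gd2) t1) t2.
by apply: eq_deg_le => x; ring.
Qed.

Lemma polyfun_sum (I : Type) (s : seq I) (F : I -> V -> int) :
  (forall i, polyfun (F i)) -> polyfun (fun x => \sum_(i <- s) F i x).
Proof.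
move=> Fpoly; elim: s => [|i s IHs].
  by apply: eq_polyfun (polyfun_const 0) => x; rewrite big_nil.
by apply: eq_polyfun (polyfunD (Fpoly i) IHs) => x; rewrite big_cons.
Qed.

Lemma polyfun_prod (I : Type) (s : seq I) (F : I -> V -> int) :
  (forall i, polyfun (F i)) -> polyfun (fun x => \prod_(i <- s) F i x).
Proof.
move=> Fpoly; elim: s => [|i s IHs].
  by apply: eq_polyfun (polyfun_const 1) => x; rewrite big_nil.
by apply: eq_polyfun (polyfunM (Fpoly i) IHs) => x; rewrite big_cons.
Qed.

Lemma polyfunX g n : polyfun g -> polyfun (fun x => g x ^+ n).
Proof.
move=> gpoly; elim: n => [|n IHn].
  by apply: eq_polyfun (polyfun_const 1) => x; rewrite expr0.
by apply: eq_polyfun (polyfunM gpoly IHn) => x; rewrite exprS.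
Qed.

Lemma polyfun_meval (p : {mpoly int[k]}) : polyfun (fun x => p.@[x]).
Proof.
apply: eq_polyfun (fun x => esym (mevalE x p)) _.
apply: polyfun_sum => m; apply: polyfunM (polyfun_const _) _.
by apply: polyfun_prod => l; apply/polyfunX/polyfun_coord.
Qed.

Lemma meval_at0 (p : {mpoly int[k]}) : p.@[0 : V] = p@_0%MM.
Proof.
elim/mpolyind: p => [|c m p _ _ IHp]; first by rewrite meval0 mcoeff0.
rewrite mevalD mevalZ mevalX mcoeffD mcoeffZ mcoeffX IHp; congr (_ * _ + _).
have [->|m_neq0] := eqVneq m 0%MM.
  by apply: big1 => l _; rewrite mnm0E expr0.
have [l ml] : exists l, m l != 0%N.
  apply/existsP; apply: contraR m_neq0 => /existsPn m0.
  by apply/eqP/mnmP => l; rewrite mnm0E; apply/eqP/negPn/m0.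
by rewrite (bigD1 l) //= ffunE expr0n (negbTE ml) mul0r.
Qed.

Lemma deg_le_meval (p : {mpoly int[k]}) :
  p@_0%MM = 0 -> exists d, deg_le d (fun x => p.@[x]).
Proof.
move=> p0; have [d pd] := polyfun_meval p; exists d.
by apply: eq_deg_le pd => x; rewrite meval_at0 p0 subr0.
Qed.

End Degree.

Arguments deg_le_zero {k} d.

Lemma mem_In (T : eqType) (x : T) (s : seq T) : x \in s -> List.In x s.
Proof. by elim: s => [|y s IHs] //=; rewrite inE => /orP[/eqP ->|/IHs]; auto. Qed.

Lemma ler_sum_In (I : Type) (s : seq I) (F : I -> int) x :
  (forall y, 0 <= F y) -> List.In x s -> F x <= \sum_(y <- s) F y.
Proof.
move=> F_ge0; elim: s => [|y s IHs] //= [->|/IHs le_x]; rewrite big_cons.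
  by rewrite lerDl sumr_ge0.
by rewrite (le_trans le_x) // lerDr.
Qed.

Definition fset_itv (s M : nat) : {fset nat} := [fset t | t in iota s.+1 (M - s)]%fset.

Lemma in_fset_itv s M t : (t \in fset_itv s M) = (s < t <= M)%N.
Proof. rewrite /fset_itv inE mem_iota; lia. Qed.

Lemma fsubset_itv s s' M M' :
  (s' <= s)%N -> (M <= M')%N -> (fset_itv s M `<=` fset_itv s' M')%fset.
Proof. by move=> le_s le_M; apply/fsubsetP => t; rewrite !in_fset_itv; lia. Qed.

Lemma fdisjoint_itv s M M' : [disjoint fset_itv s M & fset_itv M M']%fset.
Proof. by apply/fdisjointP => t; rewrite !in_fset_itv; lia. Qed.

Definition window (T : Type) (K : nat) (c : int -> T) (y : int) :
    {ffun 'I_(K.*2).+1 -> T} :=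
  [ffun t : 'I_(K.*2).+1 => c (y + (t%:Z - K%:Z))].

Lemma window_eq (T : Type) K (c : int -> T) y1 y2 t :
  window K c y1 = window K c y2 -> `|t| <= K%:Z -> c (y1 + t) = c (y2 + t).
Proof.
move=> eq_w tK; have tK' : (absz (t + K%:Z)%R < (K.*2).+1)%N by lia.
have shift_t : (absz (t + K%:Z))%:Z - K%:Z = t by lia.
by move/ffunP/(_ (Ordinal tK')): eq_w; rewrite !ffunE /= shift_t.
Qed.

Definition asbool (P : Prop) : bool :=
  if ClassicalDescription.excluded_middle_informative P then true else false.

Lemma asboolP (P : Prop) : reflect P (asbool P).
Proof.
by rewrite /asbool; case: ClassicalDescription.excluded_middle_informative; constructor.
Qed.

Definition lex_lt (N : nat) (w' w : nat -> nat) :=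
  exists d, [/\ (0 < d <= N)%N, (w' d < w d)%N & forall e, (d < e <= N)%N -> w' e = w e].

Lemma lex_lt_ind N (T : Type) (w : T -> nat -> nat) (P : T -> Prop) :
  (forall x, (forall y, lex_lt N (w y) (w x) -> P y) -> P x) -> forall x, P x.
Proof.
elim: N P => [|N IHN] P IH x.
  by apply: IH => y [d [dN _ _]]; lia.
move: {2}(w x N.+1) (erefl (w x N.+1)) => n; elim/ltn_ind: n x => n IHn x wxn.
apply: (IHN (fun x => w x N.+1 = n -> P x)) wxn => {}x IHx wxn.
apply: IH => y [d [dN lt_d eq_above]].
have [d_top|d_ne] := eqVneq d N.+1.
  by apply: IHn (erefl _); rewrite -wxn -d_top.
apply: IHx; last by rewrite eq_above ?wxn //; lia.
by exists d; split=> [||e eN]; [lia | exact: lt_d | apply: eq_above; lia].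
Qed.

Section IPRecurrence.
Variables (k : nat) (f : 'I_k -> nat -> int).
Local Notation V := {ffun 'I_k -> int}.
Local Notation family := (seq (V -> int)).

Definition ipsum (A : {fset nat}) : V := [ffun l => \sum_(t <- A) f l t].

Lemma ipsum0 : ipsum fset0 = 0.
Proof. by apply/ffunP => l; rewrite !ffunE big_seq_fset0. Qed.

Lemma ipsumU A B : [disjoint A & B]%fset -> ipsum (A `|` B)%fset = ipsum A + ipsum B.
Proof.
move=> /fdisjointP AB; apply/ffunP => l; rewrite !ffunE -big_cat.
apply/perm_big/uniq_perm => [||t]; rewrite ?mem_cat ?in_fsetU ?fset_uniq //.
rewrite cat_uniq !fset_uniq andbT /=; apply/hasPn => t tB; apply/negP => tA.
by have := AB t tA; rewrite tB.
Qed.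

Definition vdw_witness (R : family) (T : Type) (s L M : nat) (c : int -> T) :=
  exists a (A : {fset nat}), [/\ A != fset0, (A `<=` fset_itv s M)%fset, `|a| <= L%:Z &
    forall h, List.In h R -> c (a + h (ipsum A)) = c a].

(* Taking the sets beyond an arbitrary [s] lets the focusing argument choose
   each new set disjoint from the previous ones. *)
Definition ip_vdw (R : family) :=
  forall (T : finType) (s : nat), exists L M : nat, forall c : int -> T, vdw_witness R s L M c.

Lemma ip_vdw_nil : ip_vdw [::].
Proof.
move=> T s; exists 0%N, s.+1 => c; exists 0, [fset s.+1]%fset; split=> //.
  by apply/eqP => /fsetP /(_ s.+1); rewrite !inE eqxx.
by apply/fsubsetP => t; rewrite inE in_fset_itv => /eqP ->; rewrite leqnn.
Qed.

Lemma ip_vdw_sub (R R' : family) :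
  (forall h, List.In h R -> List.In h R' \/ h =1 fun=> 0) -> ip_vdw R' -> ip_vdw R.
Proof.
move=> sub_R vdwR' T s; have [L [M witness]] := vdwR' T s; exists L, M => c.
have [a [A [A0 AS aL mono]]] := witness c; exists a, A; split=> // h /sub_R[/mono //|h0].
by rewrite h0 addr0.
Qed.

Lemma vdw_witness_shift (R : family) (T : Type) (c : int -> T) b s L L' M M' :
  vdw_witness R s L M (fun z => c (b + z)) -> `|b| + L%:Z <= L'%:Z -> (M <= M')%N ->
  vdw_witness R s L' M' c.
Proof.
move=> [a [A [A0 AS aL mono]]] bL MM'; exists (b + a), A; split=> //.
- exact: fsubset_trans AS (fsubset_itv (leqnn s) MM').
- by rewrite (le_trans (ler_normD _ _)) // (le_trans _ bL) // lerD2l.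
- by move=> h hR; rewrite -addrA mono.
Qed.

Definition shiftd (A : {fset nat}) (h : V -> int) (x : V) : int :=
  h (ipsum A + x) - h (ipsum A).

Lemma deg_le_shiftd_sub e A h : deg_le e h -> deg_le e.-1 (fun x => shiftd A h x - h x).
Proof.
case: e => [|e] he; first by move=> x; rewrite /shiftd !he subrr.
by apply: eq_deg_le (he (ipsum A)) => x; rewrite /diff /shiftd (addrC (ipsum A)); ring.
Qed.

Definition pet_family (X : {fset nat}) (R : family) (q : V -> int) : family :=
  List.flat_map (fun A => List.map (fun h x => shiftd A h x - q x) R) (fpowerset X).

Lemma pet_family_mem X R q A h : (A `<=` X)%fset -> List.In h R ->
  List.In (fun x => shiftd A h x - q x) (pet_family X R q).
Proof.
move=> AX hR; apply/List.in_flat_map; exists A; split.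
  by apply: mem_In; rewrite fpowersetE.
by apply/List.in_map_iff; exists h.
Qed.

Lemma pet_familyP X R q g : List.In g (pet_family X R q) ->
  exists A h, List.In h R /\ g = fun x => shiftd A h x - q x.
Proof. by case/List.in_flat_map => A [_ /List.in_map_iff [h [<- hR]]]; exists A, h. Qed.

Section ColorFocusing.
Variables (R : family) (q : V -> int).
Hypothesis R_at0 : forall h, List.In h R -> h 0 = 0.
Hypothesis vdw_pet : forall X, ip_vdw (pet_family X R q).

Definition focus_config (T : eqType) (s M : nat) (c : int -> T) a
    (cf : seq ({fset nat} * T)) :=
  forall Ac, Ac \in cf -> [/\ Ac.1 != fset0, (Ac.1 `<=` fset_itv s M)%fset &
    forall h, List.In h R -> c (a + h (ipsum Ac.1)) = Ac.2].

Definition focused (T : eqType) (s L M : nat) (c : int -> T) (j : nat) :=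
  exists a cf, [/\ size cf = j, uniq (map snd cf), `|a| <= L%:Z & focus_config s M c a cf].

Lemma focus_config_witness (T : eqType) s L M (c : int -> T) a cf :
  focus_config s M c a cf -> c a \in map snd cf -> `|a| <= L%:Z -> vdw_witness R s L M c.
Proof.
move=> cfP /mapP [Ac Ac_in ca] aL; have [A0 AS mono] := cfP Ac Ac_in.
by exists a, Ac.1; split=> // h hR; rewrite mono // ca.
Qed.

Definition shift_bound (X : {fset nat}) : int :=
  \sum_(A <- fpowerset X) \sum_(h <- R) `|h (ipsum A)|.

Definition pivot_bound (Y : {fset nat}) : int := \sum_(B <- fpowerset Y) `|q (ipsum B)|.

Lemma shift_bound_ge0 X : 0 <= shift_bound X.
Proof. by apply: sumr_ge0 => A _; apply: sumr_ge0. Qed.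

Lemma shift_bound_ge X A h :
  (A `<=` X)%fset -> List.In h R -> `|h (ipsum A)| <= shift_bound X.
Proof.
move=> AX hR; apply: le_trans (ler_sum_In (F := fun A => \sum_(h <- R) `|h (ipsum A)|) _ _).
- exact: (ler_sum_In (F := fun h => `|h (ipsum A)|)).
- by move=> B; apply: sumr_ge0.
- by apply: mem_In; rewrite fpowersetE.
Qed.

Lemma pivot_bound_ge Y B : (B `<=` Y)%fset -> `|q (ipsum B)| <= pivot_bound Y.
Proof.
move=> BY; apply: (ler_sum_In (F := fun B => `|q (ipsum B)|)) => //.
by apply: mem_In; rewrite fpowersetE.
Qed.

(* Every old set [A] is enlarged by [B] and the base point moves by
   [- q (ipsum B)]: the colour of [a' + h (ipsum (A `|` B))] is read in the
   window around [b] through [shiftd A h - q], a member of the PET family. *)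
Lemma focus_config_extend (T : eqType) (c : int -> T) s M M' K b a B cf :
  (s <= M)%N -> B != fset0 -> (B `<=` fset_itv M M')%fset ->
  `|a| + shift_bound (fset_itv s M) <= K%:Z ->
  (forall g t, List.In g (pet_family (fset_itv s M) R q) -> `|t| <= K%:Z ->
     c (b + g (ipsum B) + t) = c (b + t)) ->
  focus_config s M (fun z => c (b + z)) a cf ->
  focus_config s (maxn M M') c (b + a - q (ipsum B))
    ((B, c (b + a)) :: [seq ((Ac.1 `|` B)%fset, Ac.2) | Ac <- cf]).
Proof.
move=> sM B0 BS aK window_B cfP.
have BS' := fsubset_trans BS (fsubset_itv sM (leq_maxr M M')).
move=> Ac; rewrite inE => /orP[/eqP -> | /mapP [[A col] Acf ->]] /=.
  split=> // h hR; rewrite -(window_B _ a (pet_family_mem q (fsub0set _) hR)).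
    by rewrite /shiftd ipsum0 add0r R_at0 // subr0; congr c; ring.
  by rewrite (le_trans _ aK) // lerDl shift_bound_ge0.
have /= [A0 AS mono] := cfP _ Acf; split.
- by rewrite fsetU_eq0 negb_and A0.
- by rewrite fsubUset BS' (fsubset_trans AS (fsubset_itv (leqnn s) (leq_maxl M M'))).
move=> h hR; rewrite -(mono h hR) -(window_B _ _ (pet_family_mem q AS hR)).
  rewrite ipsumU; last exact: fdisjointWl AS (fdisjointWr BS (fdisjoint_itv s M M')).
  by rewrite /shiftd; congr c; ring.
by rewrite (le_trans (ler_normD _ _)) // (le_trans _ aK) // lerD2l shift_bound_ge.
Qed.

Lemma focusing (T : finType) (s j : nat) : exists L M : nat, (s <= M)%N /\
  forall c : int -> T, vdw_witness R s L M c \/ focused s L M c j.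
Proof.
elim: j => [|j [L [M [sM IHj]]]].
  by exists 0%N, s; split=> // c; right; exists 0, [::]; split.
pose X := fset_itv s M; pose K := absz (L%:Z + shift_bound X).
have [L' [M' vdwX]] := vdw_pet X {ffun 'I_(K.*2).+1 -> T} M.
pose Lq := absz (pivot_bound (fset_itv M M')).
exists (L' + L + Lq)%N, (maxn M M'); split=> [|c].
  exact: leq_trans sM (leq_maxl _ _).
have [b [B [B0 BS bL' same_window]]] := vdwX (window K c).
have KX : L%:Z + shift_bound X <= K%:Z by rewrite /K abszE ler_norm.
have qB : `|q (ipsum B)| <= Lq%:Z by rewrite abszE (le_trans (pivot_bound_ge BS)) ?ler_norm.
have X_ge0 := shift_bound_ge0 X.
have [wit|[a [cf [cf_size cf_uniq aL cfP]]]] := IHj (fun z => c (b + z)).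
  by left; apply: vdw_witness_shift wit _ (leq_maxl _ _); lia.
have [old|new] := boolP (c (b + a) \in map snd cf).
  by left; apply: vdw_witness_shift (focus_config_witness cfP old aL) _ (leq_maxl _ _); lia.
right; exists (b + a - q (ipsum B)).
exists ((B, c (b + a)) :: [seq ((Ac.1 `|` B)%fset, Ac.2) | Ac <- cf]); split.
- by rewrite /= size_map cf_size.
- by rewrite /= -map_comp new.
- rewrite (le_trans (ler_normB _ _)) // (le_trans (lerD (ler_normD _ _) qB)) //; lia.
- apply: (focus_config_extend (K := K)) cfP => // [|g t gP tK].
    by rewrite (le_trans _ KX) // lerD2r.
  exact: window_eq (same_window g gP) tK.
Qed.

Lemma ip_vdw_of_focusing : ip_vdw R.
Proof.
move=> T s; have [L [M [_ foc]]] := focusing T s #|T|.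
exists L, M => c; have [//|[a [cf [cf_size cf_uniq aL cfP]]]] := foc c.
apply: focus_config_witness cfP _ aL; apply: contraT => ca_new.
have /card_uniqP : uniq (c a :: map snd cf) by rewrite /= ca_new.
rewrite /= size_map cf_size => card_cf.
by have := max_card (mem (c a :: map snd cf)); rewrite card_cf ltnn.
Qed.

End ColorFocusing.

Section PET.
Variable N : nat.

Definition represented (reps : nat -> family) (h : V -> int) :=
  exists e r, [/\ (0 < e <= N)%N, List.In r (reps e) & deg_le e.-1 (fun x => h x - r x)].

(* [reps e] lists representatives of the classes of degree [e], two functions
   being equivalent when their difference has degree less than [e]. *)
Definition pet_cover (R : family) (reps : nat -> family) :=
  (forall e r, (0 < e <= N)%N -> List.In r (reps e) -> deg_le e r) /\
  (forall h, List.In h R -> h =1 (fun=> 0) \/ represented reps h).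

Section PETStep.
Variables (R : family) (reps : nat -> family) (d : nat) (q : V -> int) (rs : family).
Hypothesis reps_deg : forall e r, (0 < e <= N)%N -> List.In r (reps e) -> deg_le e r.
Hypothesis R_rep : forall h, List.In h R -> represented reps h.
Hypothesis dN : (0 < d <= N)%N.
Hypothesis reps_d : reps d = q :: rs.
Hypothesis d_min : forall e, (0 < e <= N)%N -> reps e <> [::] -> (d <= e)%N.

Lemma deg_le_rep e r h : (0 < e <= N)%N -> List.In r (reps e) ->
  deg_le e.-1 (fun x => h x - r x) -> (d <= e)%N /\ deg_le e h.
Proof.
move=> eN r_e hr; have reps_e : reps e <> [::] by move=> reps_e; rewrite reps_e in r_e.
split; first exact: d_min.
by apply: eq_deg_le (deg_leD (deg_le_mono (leq_pred e) hr) (reps_deg eN r_e)) => x; ring.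
Qed.

(* Only the class of [q] disappears in degree [d], so the weight decreases;
   the new classes all have lower degree. *)
Definition pet_reps (P : family) (e : nat) : family :=
  if e == d then List.map (fun r x => r x - q x) rs
  else if e == d.-1 then List.filter (fun g => asbool (deg_le d.-1 g)) P
  else reps e.

Lemma pet_reps_lex P :
  lex_lt N (fun e => List.length (pet_reps P e)) (fun e => List.length (reps e)).
Proof.
exists d; split=> // [|e eN]; first by rewrite /pet_reps eqxx List.length_map reps_d.
by rewrite /pet_reps !ifN_eq //; lia.
Qed.

Lemma pet_cover_family X : pet_cover (pet_family X R q) (pet_reps (pet_family X R q)).
Proof.
have q_deg : deg_le d q by apply: reps_deg dN _; rewrite reps_d; left.
split=> [e g eN|g gP]; last have [A [h [hR g_eq]]] := pet_familyP gP.
  rewrite /pet_reps; case: eqP => [-> /List.in_map_iff [r [<- r_rs]]|_].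
    by apply: deg_leB q_deg; apply: reps_deg dN _; rewrite reps_d; right.
  by case: eqP => [-> /List.filter_In [_ /asboolP] //|_]; apply: reps_deg.
rewrite {}g_eq in gP *; have [e [r [eN r_e hr]]] := R_rep hR.
have [le_de he] := deg_le_rep eN r_e hr.
have shift_h := deg_le_shiftd_sub A he.
have [lt_de|le_ed] := ltnP d e.
  right; exists e, r; split=> //; first by rewrite /pet_reps !ifN_eq //; lia.
  have q_deg' : deg_le e.-1 q by apply: deg_le_mono q_deg; lia.
  by apply: eq_deg_le (deg_leB (deg_leD shift_h hr) q_deg') => x; ring.
have e_d : e = d by apply/eqP; rewrite eqn_leq le_ed.
rewrite {}e_d in r_e hr shift_h eN *; move: r_e; rewrite reps_d => -[r_q|r_rs].
  subst r; have g_deg : deg_le d.-1 (fun x => shiftd A h x - q x).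
    by apply: eq_deg_le (deg_leD shift_h hr) => x; ring.
  case: (posnP d.-1) => [d1_0|d1_pos]; first by left; move: g_deg; rewrite d1_0.
  right; exists d.-1, (fun x => shiftd A h x - q x); split; first by lia.
    rewrite /pet_reps ifN_eq ?eqxx; last by lia.
    by apply/List.filter_In; split; [exact: gP | exact/asboolP].
  by apply: eq_deg_le (deg_le_zero _) => x; rewrite subrr.
right; exists d, (fun x => r x - q x); split=> //.
  by rewrite /pet_reps eqxx; apply/List.in_map_iff; exists r.
by apply: eq_deg_le (deg_leD shift_h hr) => x; ring.
Qed.

End PETStep.

Lemma ip_vdw_of_cover reps : forall R, pet_cover R reps -> ip_vdw R.
Proof.
pose weight (reps' : nat -> family) e := List.length (reps' e).
elim/(lex_lt_ind (N := N) (w := weight)): reps => reps IH R [reps_deg R_rep].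
pose R1 := List.filter (fun h => ~~ asbool (h =1 fun=> 0)) R.
have R1_rep h : List.In h R1 -> represented reps h.
  by case/List.filter_In => hR /asboolP h_nz; case: (R_rep h hR).
apply: (ip_vdw_sub (R' := R1)) => [h hR|].
  have [/asboolP h0|h_nz] := boolP (asbool (h =1 fun=> 0)); [right | left] => //.
  exact/List.filter_In.
case R1_eq: R1 => [|h0 R1']; first exact: ip_vdw_nil.
have h0_R1 : List.In h0 R1 by rewrite R1_eq; left.
have [e0 [r0 [e0N r0_e0 _]]] := R1_rep h0 h0_R1.
have ex_d : exists e, (0 < e <= N)%N && ~~ nilp (reps e).
  by exists e0; rewrite e0N; case: (reps e0) r0_e0.
case: (ex_minnP ex_d) => d /andP [dN]; case reps_d: (reps d) => [//|q rs] _ d_min.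
have {}d_min e : (0 < e <= N)%N -> reps e <> [::] -> (d <= e)%N.
  by move=> eN /nilP reps_e; apply: d_min; rewrite eN.
rewrite -R1_eq; apply: (ip_vdw_of_focusing (q := q)) => [h /R1_rep|X].
  by case=> e [r [eN r_e hr]]; case: (deg_le_rep reps_deg d_min eN r_e hr) => _ /deg_le_at0.
apply: (IH (pet_reps reps d q rs (pet_family X R1 q))).
  exact: pet_reps_lex.
exact: pet_cover_family.
Qed.

End PET.

Lemma ip_vdw_of_deg_le N R : (forall h, List.In h R -> deg_le N h) -> ip_vdw R.
Proof.
move=> R_deg.
apply: (ip_vdw_of_cover (N := N.+1) (reps := fun e => if e == N.+1 then R else [::])).
split=> [e r _|h hR]; first by case: eqP => [-> /R_deg/deg_leS|_ []].
right; exists N.+1, h; split; [by rewrite leqnn | by rewrite eqxx | ].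
by apply: eq_deg_le (deg_le_zero N) => x; rewrite subrr.
Qed.

End IPRecurrence.

Local Open Scope fset_scope.

(* A finite partition of Z into r cells is encoded by the map
   c : int -> 'I_r sending each integer to (the index of) its cell. *)
Theorem mainTheorem3 (k m : nat) (p : 'I_m -> {mpoly int[k]})
  (hp : forall i : 'I_m, (p i)@_0%MM = 0)
  (r : nat) (c : int -> 'I_r) (f : 'I_k -> nat -> int) :
  exists (C : 'I_r) (a : int) (F : 'I_k -> {fset nat}),
    (forall l : 'I_k, F l != fset0) /\
    forall i : 'I_m,
      c (a + (p i).@[fun l : 'I_k => \sum_(t <- F l) f l t])%R = C.
Proof.
have [d p_deg] := fin_all_exists (fun i => deg_le_meval (hp i)).
pose R := List.map (fun i (x : {ffun 'I_k -> int}) => (p i).@[x]) (enum 'I_m).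
have vdwR : ip_vdw f R.
  apply: (@ip_vdw_of_deg_le _ f (\max_i d i)) => _ /List.in_map_iff [i [<- _]].
  exact: deg_le_mono (leq_bigmax i) (p_deg i).
have [L [M witness]] := vdwR 'I_r 0%N.
have [a [A [A0 _ _ mono]]] := witness c.
exists (c a), a, (fun=> A); split=> // i.
have i_R : List.In (fun x : {ffun 'I_k -> int} => (p i).@[x]) R.
  by apply: List.in_map; apply: mem_In; rewrite mem_enum.
by rewrite -(mono _ i_R); congr (c (a + _)%R); apply: meval_eq => l; rewrite ffunE.
Qed.
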